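(* For integers $N\ge 1$ and $n\ge 1$, $$B_{N,n}=n!\sum_{k=1}^{n}\binom{n+1}{k+1}\sum_{\substack{i_1+\cdots+i_k=n\\ i_1,\dots,i_k\ge 0}}\frac{(-N!)^k}{(N+i_1)!\cdots(N+i_k)!},$$ where the inner sum runs over all $k$-tuples of nonnegative integers $(i_1,\dots,i_k)$ with sum $n$.
   Context: For a positive integer $N$, the hypergeometric Bernoulli numbers $B_{N,n}$ ($n\ge 0$) are defined by $$\frac{x^N/N!}{e^x-\sum_{n=0}^{N-1}x^n/n!}=\sum_{n=0}^\infty B_{N,n}\frac{x^n}{n!}.$$ *)

From mathcomp Require Import all_boot all_order all_algebra.
Set Implicit Arguments. Unset Strict Implicit. Unset Printing Implicit Defensive.
Import Order.TTheory GRing.Theory Num.Theory.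
Local Open Scope ring_scope.

(* Coefficient of x^m in the formal power series  e^x - sum_{n=0}^{N-1} x^n/n!. *)
Definition hb_den_coef (R : numFieldType) (N m : nat) : R :=
  ((m`!)%:R)^-1 - (if (m < N)%N then ((m`!)%:R)^-1 else 0).

Definition hb_num_coef (R : numFieldType) (N j : nat) : R :=
  if j == N then ((N`!)%:R)^-1 else 0.

(* B is the sequence of hypergeometric Bernoulli numbers B_{N,n}:
   the formal power series identity
     (e^x - sum_{n<N} x^n/n!) * (sum_n B n x^n/n!) = x^N/N!
   holds coefficientwise (Cauchy product).  Since the constant term of the
   denominator series divided by x^N is nonzero, this determines B uniquely;
   it is the defining identity  (x^N/N!)/(e^x - ...) = sum B_{N,n} x^n/n!. *)
Definition is_hyp_bernoulli (R : numFieldType) (N : nat) (B : nat -> R) : Prop :=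
  forall j : nat,
    \sum_(i < j.+1) B i / (i`!)%:R * hb_den_coef R N (j - i) = hb_num_coef R N j.

From mathcomp Require Import all_boot all_order all_algebra.
From mathcomp Require Import zify.
Set Implicit Arguments. Unset Strict Implicit. Unset Printing Implicit Defensive.
Import Order.TTheory GRing.Theory Num.Theory.
Local Open Scope ring_scope.

(* Dividing the defining identity by x^N/N! turns it into [b * A = 1] for the
   power series [b = sum_i B_{N,i} x^i/i!] and [A = sum_j N!/(N+j)! x^j], whose
   constant term is 1.  Modulo x^(n+1), the inverse of [A = 1 - z] is the
   truncated geometric series [sum_(j <= n) z^j], which by the hockey-stick
   identity equals [sum_(k <= n) C(n+1, k+1) (-A)^k]; the coefficient of x^n in
   [(-A)^k] is the sum over compositions of n into k parts in the statement. *)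

Lemma sum_exprD1 (R : pzSemiRingType) (x : R) (n : nat) :
  \sum_(j < n.+1) (1 + x) ^+ j = \sum_(k < n.+1) x ^+ k *+ 'C(n.+1, k.+1).
Proof.
elim: n => [|n IHn]; first by rewrite !big_ord1 expr0 bin1.
rewrite big_ord_recr /= IHn [1 + x]addrC exprD1n.
under [RHS]eq_bigr do rewrite binS mulrnDr.
rewrite big_split /=; congr (_ + _).
by rewrite [RHS]big_ord_recr /= bin_small // mulr0n addr0.
Qed.

Section TruncatedInverse.

Variable R : comNzRingType.
Implicit Types p q r : {poly R}.

Lemma take_polyMl m p q : take_poly m (take_poly m p * q) = take_poly m (p * q).
Proof.
rewrite -[in RHS](poly_take_drop m p) mulrDl mulrAC take_polyD.
by rewrite take_polyMXn_0 addr0.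
Qed.

Lemma take_polyMr m p q : take_poly m (p * take_poly m q) = take_poly m (p * q).
Proof. by rewrite mulrC take_polyMl mulrC. Qed.

Lemma take_poly_inv_uniq m p q r :
  take_poly m (p * q) = 1 -> take_poly m (q * r) = 1 ->
  take_poly m p = take_poly m r.
Proof.
move=> pq1 qr1.
by rewrite -[p]mulr1 -qr1 take_polyMr mulrA -take_polyMl pq1 mul1r.
Qed.

Lemma take_poly_exp m p k : p`_0 = 0 -> (m <= k)%N -> take_poly m (p ^+ k) = 0.
Proof.
move=> p0 le_mk; have take1p : take_poly 1 p = 0.
  by apply/polyP => i; rewrite coef_take_poly coef0; case: i.
rewrite -(poly_take_drop 1 p) take1p add0r expr1 exprMn take_polyMXn.
by move: le_mk; rewrite -subn_eq0 => /eqP ->; rewrite take_poly0l mul0r.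
Qed.

Lemma take_poly_geom_inv m q :
  q`_0 = 1 -> take_poly m.+1 (q * \sum_(k < m.+1) (- q) ^+ k *+ 'C(m.+1, k.+1)) = 1.
Proof.
move=> q0; rewrite -sum_exprD1.
have -> : q * \sum_(j < m.+1) (1 - q) ^+ j = 1 - (1 - q) ^+ m.+1.
  by rewrite -[RHS]opprB subrX1 -mulNr opprB subKr.
rewrite take_polyD take_poly_id ?size_poly1 // raddfN /= take_poly_exp //.
  by rewrite oppr0 addr0.
by rewrite coefB coef1 q0 subrr.
Qed.

End TruncatedInverse.

Lemma coef_exp_poly (R : comNzRingType) (a : nat -> R) (n k m : nat) :
  ((\poly_(i < n.+1) a i) ^+ k)`_m =
  \sum_(t : {ffun 'I_k -> 'I_n.+1} | (\sum_(i < k) (t i : nat))%N == m)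
     \prod_(i < k) a (t i).
Proof.
rewrite poly_def -[k in LHS]card_ord -prodr_const bigA_distr_bigA /=.
rewrite coef_sum [RHS]big_mkcond /=; apply: eq_bigr => t _.
have -> : \prod_(i < k) (a (t i) *: 'X^(t i)) =
          (\prod_(i < k) a (t i))%:P * 'X^(\sum_(i < k) (t i : nat)).
  rewrite -prodrXr rmorph_prod -big_split /=.
  by apply: eq_bigr => i _; rewrite mul_polyC.
by rewrite coefCM coefXn eq_sym; case: eqP; rewrite ?mulr1 ?mulr0.
Qed.

Lemma natr_fact_neq0 (R : numDomainType) (n : nat) : (n`!)%:R != 0 :> R.
Proof. by rewrite pnatr_eq0 -lt0n fact_gt0. Qed.

Lemma hb_den_coef_lt (R : numFieldType) (N j : nat) :
  (j < N)%N -> hb_den_coef R N j = 0.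
Proof. by rewrite /hb_den_coef => ->; rewrite subrr. Qed.

Lemma hb_den_coef_ge (R : numFieldType) (N j : nat) :
  (N <= j)%N -> hb_den_coef R N j = (j`!)%:R^-1.
Proof. by rewrite /hb_den_coef ltnNge => ->; rewrite subr0. Qed.

Definition hb_ratio (R : numFieldType) (N j : nat) : R :=
  (N`!)%:R / ((N + j)`!)%:R.

Lemma hyp_bernoulli_convolution (R : numFieldType) (N : nat) (B : nat -> R) :
  is_hyp_bernoulli N B -> forall m,
  \sum_(i < m.+1) B i / (i`!)%:R * hb_ratio R N (m - i) = (m == 0)%:R.
Proof.
move=> hB m; transitivity
  ((N`!)%:R * \sum_(i < (N + m).+1) B i / (i`!)%:R * hb_den_coef R N (N + m - i)).
  pose F i := B i / (i`!)%:R * hb_ratio R N (m - i).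
  rewrite -addnS mulr_sumr (big_ord_widen _ F (leq_addl N m.+1)) big_mkcond /=.
  apply: eq_bigr => i _; rewrite /F; case: ltnP => [lt_im | le_mi].
    rewrite hb_den_coef_ge -?addnBA; try lia.
    by rewrite /hb_ratio mulrCA mulrA.
  by rewrite hb_den_coef_lt ?mulr0 //; have := ltn_ord i; lia.
rewrite hB /hb_num_coef; case: m => [|m].
  by rewrite addn0 eqxx mulfV ?natr_fact_neq0.
by rewrite ifF ?mulr0 //; lia.
Qed.

Lemma take_poly_hyp_bernoulli (R : numFieldType) (N n : nat) (B : nat -> R) :
  is_hyp_bernoulli N B ->
  take_poly n.+1
    (\poly_(i < n.+1) (B i / (i`!)%:R) * \poly_(i < n.+1) hb_ratio R N i) = 1.
Proof.
move=> hB; apply/polyP => m; rewrite coef_take_poly coef1.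
case: ltnP => [le_mn | lt_nm]; last by case: m lt_nm.
rewrite coefM -(hyp_bernoulli_convolution hB m).
by apply: eq_bigr => -[i /= lt_im] _; rewrite !coef_poly ifT ?ifT //; lia.
Qed.

Theorem proposition3 (R : numFieldType) (N n : nat) (B : nat -> R) :
  (1 <= N)%N -> (1 <= n)%N -> is_hyp_bernoulli N B ->
  B n = (n`!)%:R *
    \sum_(1 <= k < n.+1)
      ('C(n.+1, k.+1))%:R *
      \sum_(t : {ffun 'I_k -> 'I_n.+1} | (\sum_(i < k) (t i : nat))%N == n)
        (- (N`!)%:R) ^+ k / \prod_(i < k) ((N + t i)`!)%:R.
Proof.
(* The argument also works for N = 0. *)
move=> _ n_gt0 hB.
pose A := \poly_(i < n.+1) hb_ratio R N i.
have A0 : A`_0 = 1 by rewrite coef_poly /hb_ratio addn0 mulfV ?natr_fact_neq0.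
have := take_poly_inv_uniq (take_poly_hyp_bernoulli n hB) (take_poly_geom_inv n A0).
move=> /(congr1 (coefp n)) /=; rewrite !coef_take_poly ltnSn coef_poly ltnSn => bn.
rewrite -[B n](divfK (natr_fact_neq0 R n)) [LHS]mulrC bn.
rewrite coef_sum big_ord_recl expr0 coefMn coef1 gtn_eqF // mul0rn add0r.
rewrite big_add1 big_mkord; congr (_ * _); apply: eq_bigr => k _.
have -> : - A = \poly_(i < n.+1) - hb_ratio R N i.
  by apply/polyP => i; rewrite coefN !coef_poly; case: ifP; rewrite ?oppr0.
rewrite lift0 coefMn coef_exp_poly mulr_natl; congr (_ *+ _).
apply: eq_bigr => t _.
have -> : (- (N`!)%:R) ^+ k.+1 = \prod_(i < k.+1) - (N`!)%:R :> R.
  by rewrite prodr_const card_ord.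
by rewrite -prodf_div; apply: eq_bigr => i _; rewrite mulNr.
Qed.
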